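(* (i) The collection $\mathrm{Prim}\,Mag=(\mathrm{Prim}\,Mag(n))_{n\ge1}$ is a suboperad of the operad $Mag$: it contains the identity operation and is closed under operadic composition, so that the composition $Mag\circ Mag\to Mag$ restricts to $\mathrm{Prim}\,Mag\circ\mathrm{Prim}\,Mag\to\mathrm{Prim}\,Mag$. (ii) For every $As^c$-$Mag$-bialgebra $\mathcal H$, every $p\in\mathrm{Prim}\,Mag(n)$ and all $x_1,\dots,x_n\in\mathrm{Prim}\,\mathcal H$, the element $p(x_1,\dots,x_n)$ computed with the product of $\mathcal H$ lies in $\mathrm{Prim}\,\mathcal H$; thus $\mathrm{Prim}\,\mathcal H$ is an algebra over $\mathrm{Prim}\,Mag$.
   Context: Let $\mathbb K$ be a field. An $As^c$-$Mag$-bialgebra is a vector space $\mathcal H$ with a bilinear product $\cdot$ (not assumed associative) with two-sided unit $1$ and a coassociative counital coproduct $\Delta$ with $\Delta(1)=1\otimes1$ and $\Delta(x\cdot y)=\Delta(x)\cdot(1\otimes y)+(x\otimes1)\cdot\Delta(y)-x\otimes y$, the product on $\mathcal H\otimes\mathcal H$ being componentwise; $\mathrm{Prim}\,\mathcal H$ is the set of $x$ in the kernel of the counit with $\Delta(x)=x\otimes1+1\otimes x$. $Mag$ is the operad of unital magmatic algebras: $Mag(n)=\mathbb K[Y_{n-1}]\otimes\mathbb K[S_n]$, $Y_{n-1}$ the set of planar binary rooted trees with $n$ leaves, an element $(t,\sigma)$ acting on a magmatic algebra by evaluating the bracketing $t$ on $(x_{\sigma^{-1}(1)},\dots,x_{\sigma^{-1}(n)})$.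 The free magmatic algebra $Mag(V)$ on a vector space $V$ carries the unique coproduct $\Delta$ with $\Delta(1)=1\otimes1$, $\Delta(v)=v\otimes1+1\otimes v$ ($v\in V$) satisfying the relation above, making it an $As^c$-$Mag$-bialgebra. $\mathrm{Prim}\,Mag(n)\subset Mag(n)$ is the subspace of operations $p$ such that $p(x_1,\dots,x_n)$ is primitive in $Mag(\mathbb Kx_1\oplus\dots\oplus\mathbb Kx_n)$. *)

From HB Require Import structures.
From mathcomp Require Import all_boot all_order fingroup perm all_algebra.
Set Implicit Arguments. Unset Strict Implicit. Unset Printing Implicit Defensive.
Import GRing.Theory.
Local Open Scope ring_scope.

(* Planar binary rooted trees (unlabelled); Y_{n-1} = trees with n leaves *)
Inductive tree := Lf | Nd of tree & tree.

Fixpoint leaves (t : tree) : nat :=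
  match t with Lf => 1%N | Nd l r => (leaves l + leaves r)%N end.

Fixpoint eval_tree {A : Type} (x0 : A) (mul : A -> A -> A) (t : tree) (xs : seq A) : A :=
  match t with
  | Lf => head x0 xs
  | Nd l r => mul (eval_tree x0 mul l (take (leaves l) xs))
                  (eval_tree x0 mul r (drop (leaves l) xs))
  end.

(* Mag(n) = K[Y_{n-1}] (x) K[S_n]: an element is a formal linear combination
   of basis pairs (t, sigma), represented as a list of (coefficient, t, sigma);
   it lies in Mag(n) when every tree has n leaves. *)
Definition Mag (K : fieldType) (n : nat) := seq (K * tree * 'S_n).

Definition in_Mag (K : fieldType) (n : nat) (p : Mag K n) : bool :=
  all (fun x => leaves x.1.2 == n) p.

(* Action of p in Mag(n) on x_1..x_n in a (unital) magmatic algebra A, given by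
   its addition, zero, scalar action and product:
   (t, sigma) acts by evaluating t on (x_{sigma^-1(1)}, ..., x_{sigma^-1(n)}). *)
Definition mag_act (K : fieldType) {A : Type} (add : A -> A -> A) (zero : A)
  (scale : K -> A -> A) (mul : A -> A -> A) (n : nat) (p : Mag K n)
  (x : 'I_n -> A) : A :=
  foldr (fun cts acc =>
           add (scale cts.1.1
                  (eval_tree zero mul cts.1.2 [seq x (((cts.2 : 'S_n)^-1)%g i) | i <- enum 'I_n]))
               acc) zero p.

(* The free unital magmatic algebra Mag(K x_0 + ... + K x_{n-1}).
   Basis: the unit (None) and nonempty planar binary trees with leaves
   labelled by generator indices (Some T). *)
Inductive mterm := MLeaf of nat | MNode of mterm & mterm.

Fixpoint mterm_eqb (a b : mterm) : bool :=
  match a, b with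
  | MLeaf i, MLeaf j => i == j
  | MNode a1 a2, MNode b1 b2 => mterm_eqb a1 b1 && mterm_eqb a2 b2
  | _, _ => false
  end.

Lemma mterm_eqP : Equality.axiom mterm_eqb.
Proof.
elim=> [i|a1 IH1 a2 IH2] [j|b1 b2] /=; try by constructor.
- by apply: (iffP eqP) => [->|[]].
- apply: (iffP andP) => [[/IH1 -> /IH2 ->]|[<- <-]] //.
  by split; [apply/IH1|apply/IH2].
Qed.

HB.instance Definition _ := hasDecEq.Build mterm mterm_eqP.

Definition bmul (a b : option mterm) : option mterm :=
  match a, b with
  | None, _ => b
  | _, None => a
  | Some u, Some v => Some (MNode u v)
  end.

Section FreeMag.
Variable K : fieldType.

(* elements of the free algebra: formal sums, compared by coefficients *)
Definition fsum := seq (K * option mterm).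
(* elements of Mag(V) (x) Mag(V) = K[basis x basis] *)
Definition fsum2 := seq (K * option mterm * option mterm).

Definition coef (s : fsum) (b : option mterm) : K :=
  \sum_(x <- s | x.2 == b) x.1.
Definition coef2 (s : fsum2) (b1 b2 : option mterm) : K :=
  \sum_(x <- s | (x.1.2 == b1) && (x.2 == b2)) x.1.1.

Definition fscale (c : K) (s : fsum) : fsum := [seq (c * x.1, x.2) | x <- s].
Definition fmul (s t : fsum) : fsum :=
  [seq (x.1 * y.1, bmul x.2 y.2) | x <- s, y <- t].
Definition fgen (i : nat) : fsum := [:: (1, Some (MLeaf i))].

(* coproduct on basis trees:
   Delta(x_i) = x_i (x) 1 + 1 (x) x_i,
   Delta(a.b) = Delta(a).(1 (x) b) + (a (x) 1).Delta(b) - a (x) b *)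
Fixpoint delta_t (u : mterm) : fsum2 :=
  match u with
  | MLeaf i => [:: (1, Some (MLeaf i), None); (1, None, Some (MLeaf i))]
  | MNode l r =>
      [seq (x.1.1, x.1.2, bmul x.2 (Some r)) | x <- delta_t l]
      ++ [seq (x.1.1, bmul (Some l) x.1.2, x.2) | x <- delta_t r]
      ++ [:: (-1, Some l, Some r)]
  end.

Definition delta_b (b : option mterm) : fsum2 :=
  match b with None => [:: (1, None, None)] | Some u => delta_t u end.

Definition fdelta (s : fsum) : fsum2 :=
  flatten [seq [seq (x.1 * y.1.1, y.1.2, y.2) | y <- delta_b x.2] | x <- s].

Definition fcounit (s : fsum) : K := coef s None.

Definition free_prim (s : fsum) : Prop :=
  fcounit s = 0 /\
  forall b1 b2, coef2 (fdelta s) b1 b2 =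
    coef2 ([seq (x.1, x.2, None) | x <- s] ++ [seq (x.1, None, x.2) | x <- s]) b1 b2.

Definition eval_free (n : nat) (p : Mag K n) : fsum :=
  mag_act cat [::] fscale fmul p (fun i => fgen i).

Definition PrimMag (n : nat) (p : Mag K n) : Prop :=
  in_Mag p /\ free_prim (eval_free p).

Definition mag_id : Mag K 1 := [:: (1, Lf, 1%g)].

Definition to_term (n : nat) (t : tree) (s : 'S_n) : mterm :=
  eval_tree (MLeaf 0) MNode t [seq MLeaf (val ((s^-1)%g i)) | i <- enum 'I_n].

Fixpoint shape (u : mterm) : tree :=
  match u with MLeaf _ => Lf | MNode a b => Nd (shape a) (shape b) end.
Fixpoint labels (u : mterm) : seq nat :=
  match u with MLeaf i => [:: i] | MNode a b => labels a ++ labels b end.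
Fixpoint shift_term (k : nat) (u : mterm) : mterm :=
  match u with MLeaf i => MLeaf (k + i) | MNode a b => MNode (shift_term k a) (shift_term k b) end.

(* the permutation sigma of M letters such that position j carries label
   sigma^-1(j) (labels are assumed to form a permutation of 0..M-1) *)
Definition perm_of_labels (M : nat) (ls : seq nat) : 'S_M :=
  ((insubd (1%g : 'S_M) [ffun j : 'I_M => insubd j (nth 0%N ls j)])^-1)%g.

Fixpoint subst_term (f : nat -> seq (K * mterm)) (u : mterm) : seq (K * mterm) :=
  match u with
  | MLeaf k => f k
  | MNode a b => [seq (x.1 * y.1, MNode x.2 y.2) | x <- subst_term f a, y <- subst_term f b]
  end.

Definition offset (n : nat) (m : 'I_n -> nat) (i : 'I_n) : nat :=
  (\sum_(j < n | (j < i)%N) m j)%N.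

(* operadic composition gamma : Mag(n) (x) Mag(m_1) (x) ... (x) Mag(m_n) -> Mag(m_1+...+m_n),
   gamma(p; q_1,...,q_n)(y) = p(q_1(y_1..y_{m_1}), q_2(y_{m_1+1}..), ...) *)
Definition mag_comp (n : nat) (m : 'I_n -> nat) (p : Mag K n)
  (q : forall i : 'I_n, Mag K (m i)) : Mag K (\sum_(i < n) m i)%N :=
  let f (k : nat) : seq (K * mterm) :=
    match @insub _ (fun k => (k < n)%N) 'I_n k with
    | Some i => [seq (x.1.1, shift_term (offset m i) (to_term x.1.2 x.2)) | x <- q i]
    | None => [::]
    end in
  flatten [seq [seq (x.1.1 * y.1, shape y.2, perm_of_labels (\sum_(i < n) m i)%N (labels y.2))
               | y <- subst_term f (to_term x.1.2 x.2)] | x <- p].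

End FreeMag.

(* Elements of H (x) H (resp. H (x) H (x) H) are
   represented by finite formal sums of pure tensors; two such sums are equal
   in the tensor product iff they have the same image under every bilinear
   (resp. trilinear) map into every K-vector space (universal property). *)
Section Bialg.
Variables (K : fieldType) (H : lmodType K).

Definition bilinear_map (W : lmodType K) (b : H -> H -> W) : Prop :=
  (forall (k : K) x y z, b (k *: x + y) z = k *: b x z + b y z) /\
  (forall (k : K) x y z, b z (k *: x + y) = k *: b z x + b z y).

Definition trilinear_map (W : lmodType K) (b : H -> H -> H -> W) : Prop :=
  (forall (k : K) x y u v, b (k *: x + y) u v = k *: b x u v + b y u v) /\
  (forall (k : K) x y u v, b u (k *: x + y) v = k *: b u x v + b u y v) /\
  (forall (k : K) x y u v, b u v (k *: x + y) = k *: b u v x + b u v y).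

Definition teq2 (s t : seq (H * H)) : Prop :=
  forall (W : lmodType K) (b : H -> H -> W), bilinear_map b ->
    \sum_(x <- s) b x.1 x.2 = \sum_(x <- t) b x.1 x.2.

Definition teq3 (s t : seq (H * H * H)) : Prop :=
  forall (W : lmodType K) (b : H -> H -> H -> W), trilinear_map b ->
    \sum_(x <- s) b x.1.1 x.1.2 x.2 = \sum_(x <- t) b x.1.1 x.1.2 x.2.

Definition tscale (k : K) (s : seq (H * H)) : seq (H * H) :=
  [seq (k *: x.1, x.2) | x <- s].

Definition AsMag_bialgebra (mul : H -> H -> H) (one : H)
  (Delta : H -> seq (H * H)) (eps : H -> K) : Prop :=
  (
      (forall (k : K) x y z, mul (k *: x + y) z = k *: mul x z + mul y z) /\
      (forall (k : K) x y z, mul z (k *: x + y) = k *: mul z x + mul z y) /\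
      (forall x, mul one x = x) /\ (forall x, mul x one = x) /\
      (forall (k : K) x y, teq2 (Delta (k *: x + y)) (tscale k (Delta x) ++ Delta y)) /\
      (forall (k : K) x y, eps (k *: x + y) = k * eps x + eps y) /\
      (forall x, teq3 (flatten [seq [seq (y.1, y.2, z.2) | y <- Delta z.1] | z <- Delta x])
                      (flatten [seq [seq (z.1, y.1, y.2) | y <- Delta z.2] | z <- Delta x])) /\
      (forall x, \sum_(z <- Delta x) eps z.1 *: z.2 = x /\
                 \sum_(z <- Delta x) eps z.2 *: z.1 = x) /\
      teq2 (Delta one) [:: (one, one)] /\
      (forall x y, teq2 (Delta (mul x y))
                        ([seq (z.1, mul z.2 y) | z <- Delta x]
                         ++ [seq (mul x z.1, z.2) | z <- Delta y]
                         ++ [:: (- x, y)]))).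

Definition PrimH (one : H) (Delta : H -> seq (H * H)) (eps : H -> K) (x : H) : Prop :=
  eps x = 0 /\ teq2 (Delta x) [:: (x, one); (one, x)].

End Bialg.

(* Evaluating the free unital magmatic algebra Mag(V) in a unital magmatic
   algebra H with a coproduct obeying
   Delta(x.y) = Delta(x).(1 (x) y) + (x (x) 1).Delta(y) - x (x) y
   intertwines the coproducts: on bracketed words this is an induction along the
   compatibility relation, tested against all bilinear maps.  Hence p(x_1..x_n)
   is primitive in H whenever p is primitive in Mag(n) and the x_i are primitive;
   the counit vanishes on it because counitality forces eps(x) = 2 eps(1) eps(x)
   with eps(1) idempotent.
   For (i), realise Mag(V) as the monoid algebra over bracketed words; it obeys
   the same relation, and gamma(p; q_1..q_n) evaluates to p applied to the
   primitive elements q_i(shifted generators), so it is primitive by the same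
   argument.  Testing against the forms u (x) v |-> u_a v_b turns this back into
   the coefficientwise definition of Prim Mag. *)

From Pilot Require Import Defs.
From HB Require Import structures.
From mathcomp Require Import all_boot all_order fingroup perm all_algebra.
From mathcomp Require Import finmap monalg.
Set Implicit Arguments. Unset Strict Implicit. Unset Printing Implicit Defensive.
Import GRing.Theory.
Local Open Scope ring_scope.

Fixpoint mterm_enc (u : mterm) : GenTree.tree nat :=
  match u with
  | MLeaf i => GenTree.Leaf i
  | MNode a b => GenTree.Node 0 [:: mterm_enc a; mterm_enc b]
  end.

Fixpoint mterm_dec (t : GenTree.tree nat) : option mterm :=
  match t with
  | GenTree.Leaf i => Some (MLeaf i)
  | GenTree.Node _ [:: a; b] =>
      if (mterm_dec a, mterm_dec b) is (Some u, Some v) then Some (MNode u v) else None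
  | _ => None
  end.

Lemma mterm_encK : pcancel mterm_enc mterm_dec.
Proof. by elim=> //= a -> b ->. Qed.

HB.instance Definition _ := Choice.copy mterm (pcan_type mterm_encK).

Fixpoint tree_eqb (a b : tree) : bool :=
  match a, b with
  | Lf, Lf => true
  | Nd a1 a2, Nd b1 b2 => tree_eqb a1 b1 && tree_eqb a2 b2
  | _, _ => false
  end.

Lemma tree_eqP : Equality.axiom tree_eqb.
Proof.
elim=> [|a1 IH1 a2 IH2] [|b1 b2] /=; try by constructor.
apply: (iffP andP) => [[/IH1 -> /IH2 ->]|[<- <-]] //.
by split; [apply/IH1|apply/IH2].
Qed.

HB.instance Definition _ := hasDecEq.Build tree tree_eqP.

Section LinearFun.
Variables (K : fieldType) (U V : lmodType K) (f : U -> V).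
Hypothesis f_lin : linear f.

Let fL : {linear U -> V} := HB.pack f (GRing.isLinear.Build K U V *:%R f f_lin).

Lemma lin0 : f 0 = 0. Proof. exact: (linear0 fL). Qed.
Lemma linD x y : f (x + y) = f x + f y. Proof. exact: (linearD fL). Qed.
Lemma linN x : f (- x) = - f x. Proof. exact: (linearN fL). Qed.
Lemma linZ c x : f (c *: x) = c *: f x. Proof. exact: (linearZ_LR fL). Qed.
Lemma lin_sum (I : Type) (r : seq I) (F : I -> U) :
  f (\sum_(i <- r) F i) = \sum_(i <- r) f (F i).
Proof. exact: (linear_sum fL). Qed.

End LinearFun.

Section Bilinear.
Variables (K : fieldType) (H W : lmodType K) (b : H -> H -> W).
Hypothesis b_bil : bilinear_map b.

Lemma bilinear_linl z : linear (b^~ z).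
Proof. by move=> k x y; apply: b_bil.1. Qed.

Lemma bilinear_linr z : linear (b z).
Proof. by move=> k x y; apply: b_bil.2. Qed.

Lemma bilinear_compl (F : H -> H) : linear F -> bilinear_map (fun u v => b (F u) v).
Proof. by move=> F_lin; split=> k x y z; rewrite ?F_lin; [apply: b_bil.1|apply: b_bil.2]. Qed.

Lemma bilinear_compr (F : H -> H) : linear F -> bilinear_map (fun u v => b u (F v)).
Proof. by move=> F_lin; split=> k x y z; rewrite ?F_lin; [apply: b_bil.1|apply: b_bil.2]. Qed.

End Bilinear.

Section LinearExtension.
Variables (K : fieldType) (T : choiceType) (W : lmodType K).
Implicit Types (gam : T -> W) (g : {malg K[T]}).

Definition mlift gam g : W := \sum_(k <- msupp g) g@_k *: gam k.

Lemma mliftEw gam (D : {fset T}) g : (msupp g `<=` D)%fset ->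
  mlift gam g = \sum_(k <- D) g@_k *: gam k.
Proof.
move=> le_gD; rewrite /mlift (big_fset_incl _ le_gD) //= => k _ /mcoeff_outdom ->.
by rewrite scale0r.
Qed.

Lemma mlift_is_linear gam : linear (mlift gam).
Proof.
move=> c g g'; set D := (msupp g `|` msupp g' `|` msupp (c *: g + g'))%fset.
rewrite (@mliftEw _ D) ?fsubsetUr // (@mliftEw _ D g) ?(@mliftEw _ D g').
- rewrite scaler_sumr -big_split; apply: eq_bigr => k _.
  by rewrite mcoeffD mcoeffZ scalerDl scalerA.
- by rewrite /D (fsetUC (msupp g)) -fsetUA fsubsetUl.
- by rewrite /D -fsetUA fsubsetUl.
Qed.

HB.instance Definition _ gam :=
  GRing.isLinear.Build K {malg K[T]} W *:%R (mlift gam) (mlift_is_linear gam).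

Lemma mliftU gam c k : mlift gam << c *g k >> = c *: gam k.
Proof. by rewrite (@mliftEw _ _ _ msuppU_le) big_seq_fset1 mcoeffUU. Qed.

Lemma eq_mlift gam1 gam2 : gam1 =1 gam2 -> mlift gam1 =1 mlift gam2.
Proof. by move=> e g; apply: eq_bigr => k _; rewrite e. Qed.

Lemma mlift_lin_fun c gam1 gam2 g :
  mlift (fun k => c *: gam1 k + gam2 k) g = c *: mlift gam1 g + mlift gam2 g.
Proof.
rewrite /mlift scaler_sumr -big_split /=.
by apply: eq_bigr => k _; rewrite scalerDr !scalerA mulrC.
Qed.

End LinearExtension.

Definition mlift2 (K : fieldType) (T : choiceType) (W : lmodType K) (F : T -> T -> W)
  (g1 g2 : {malg K[T]}) : W :=
  mlift (fun i => mlift (F i) g2) g1.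

Section LinearExtensionFacts.
Variables (K : fieldType) (T : choiceType).
Implicit Types (g : {malg K[T]}).

Lemma mlift_funD (W : lmodType K) (gam1 gam2 : T -> W) g :
  mlift (fun k => gam1 k + gam2 k) g = mlift gam1 g + mlift gam2 g.
Proof.
rewrite -[LHS](eq_mlift (gam1 := fun k => 1 *: gam1 k + gam2 k)) => [|k].
  by rewrite mlift_lin_fun scale1r.
by rewrite scale1r.
Qed.

Lemma mlift_funB (W : lmodType K) (gam1 gam2 : T -> W) g :
  mlift (fun k => gam1 k - gam2 k) g = mlift gam1 g - mlift gam2 g.
Proof.
rewrite (eq_mlift (gam2 := fun k => (-1) *: gam2 k + gam1 k)) => [|k].
  by rewrite mlift_lin_fun scaleN1r addrC.
by rewrite scaleN1r addrC.
Qed.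

Lemma lin_mlift (W W' : lmodType K) (f : W -> W') (gam : T -> W) g :
  linear f -> f (mlift gam g) = mlift (fun k => f (gam k)) g.
Proof.
move=> f_lin; rewrite /mlift (lin_sum f_lin).
by apply: eq_bigr => k _; rewrite (linZ f_lin).
Qed.

Lemma mlift2_swap (W : lmodType K) (F : T -> T -> W) g1 g2 :
  mlift2 F g1 g2 = mlift (fun j => mlift (F^~ j) g1) g2.
Proof.
rewrite /mlift2 /mlift; under [RHS]eq_bigr do rewrite scaler_sumr.
rewrite [RHS]exchange_big /=; apply: eq_bigr => i _; rewrite scaler_sumr.
by apply: eq_bigr => j _; rewrite !scalerA mulrC.
Qed.

Lemma lin_mlift2 (W W' : lmodType K) (f : W -> W') (F : T -> T -> W) g1 g2 :
  linear f -> f (mlift2 F g1 g2) = mlift2 (fun i j => f (F i j)) g1 g2.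
Proof.
move=> f_lin; rewrite /mlift2 lin_mlift //.
by apply: eq_mlift => i; rewrite lin_mlift.
Qed.

Lemma mlift2_comb (W : lmodType K) (F1 F2 F3 : T -> T -> W) g1 g2 :
  mlift2 (fun i j => F1 i j + (F2 i j - F3 i j)) g1 g2 =
  mlift2 F1 g1 g2 + (mlift2 F2 g1 g2 - mlift2 F3 g1 g2).
Proof.
rewrite /mlift2 -mlift_funB -mlift_funD; apply: eq_mlift => i.
by rewrite -mlift_funB -mlift_funD.
Qed.

Lemma scale_malgU c k : c *: (<< k >> : {malg K[T]}) = << c *g k >>.
Proof. by apply/malgP => k'; rewrite mcoeffZ !mcoeffU mulr_natr. Qed.

Lemma mlift_malgU g : mlift (fun k => << k >>) g = g.
Proof. by rewrite {2}(monalgE g); apply: eq_bigr => k _; apply: scale_malgU. Qed.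

Lemma bilinear_mlift2 (W : lmodType K) (b : {malg K[T]} -> {malg K[T]} -> W) g1 g2 :
  bilinear_map b -> b g1 g2 = mlift2 (fun i j => b << i >> << j >>) g1 g2.
Proof.
move=> b_bil; rewrite -{1}(mlift_malgU g1) (lin_mlift _ _ (bilinear_linl b_bil _)).
by apply: eq_mlift => i; rewrite -{1}(mlift_malgU g2) (lin_mlift _ _ (bilinear_linr b_bil _)).
Qed.

End LinearExtensionFacts.

Definition tsum (K : fieldType) (H W : lmodType K) (b : H -> H -> W) (D : seq (H * H)) : W :=
  \sum_(x <- D) b x.1 x.2.

Definition Delta_prim (K : fieldType) (H : lmodType K) (one : H)
  (Delta : H -> seq (H * H)) (x : H) : Prop :=
  teq2 (Delta x) [:: (x, one); (one, x)].

(* The axioms of an As^c-Mag-bialgebra minus coassociativity and the counit: all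
   that is needed to push primitive elements through evaluation maps. *)
Record mag_coprod (K : fieldType) (H : lmodType K) (mul : H -> H -> H) (one : H)
  (Delta : H -> seq (H * H)) : Prop := MagCoprod {
  mag_mull : forall z, linear (mul^~ z);
  mag_mulr : forall z, linear (mul z);
  mag_mul1x : left_id one mul;
  mag_mulx1 : right_id one mul;
  mag_DeltaD : forall (k : K) x y, teq2 (Delta (k *: x + y)) (tscale k (Delta x) ++ Delta y);
  mag_Delta1 : teq2 (Delta one) [:: (one, one)];
  mag_DeltaM : forall x y, teq2 (Delta (mul x y))
    ([seq (z.1, mul z.2 y) | z <- Delta x] ++ [seq (mul x z.1, z.2) | z <- Delta y]
     ++ [:: (- x, y)])
}.

Lemma AsMag_bialgebra_coprod (K : fieldType) (H : lmodType K) (mul : H -> H -> H)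
  (one : H) (Delta : H -> seq (H * H)) (eps : H -> K) :
  AsMag_bialgebra mul one Delta eps -> mag_coprod mul one Delta.
Proof.
case=> mulL [mulR [mul1x [mulx1 [DeltaD [_ [_ [_ [Delta1 DeltaM]]]]]]]].
by split=> // z k x y; [apply: mulL | apply: mulR].
Qed.

Section FormalSums.
Variables (K : fieldType) (W : lmodType K).

Definition fsum2_lift (F : option mterm -> option mterm -> W) (D : fsum2 K) : W :=
  \sum_(e <- D) e.1.1 *: F e.1.2 e.2.

Definition prim_list (s : fsum K) : fsum2 K :=
  [seq (x.1, x.2, None) | x <- s] ++ [seq (x.1, None, x.2) | x <- s].

Definition malg_of_fsum2 (D : fsum2 K) : {malg K[(option mterm * option mterm)%type]} :=
  \sum_(e <- D) << e.1.1 *g (e.1.2, e.2) >>.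

Lemma malg_of_fsum2_coef D b1 b2 : (malg_of_fsum2 D)@_(b1, b2) = coef2 D b1 b2.
Proof.
elim: D => [|e D IH]; first by rewrite /malg_of_fsum2 /coef2 !big_nil mcoeff0.
rewrite /malg_of_fsum2 /coef2 !big_cons mcoeffD IH mcoeffU xpair_eqE.
by case: ifP; rewrite ?mulr1n ?mulr0n ?add0r.
Qed.

Lemma fsum2_lift_coef2 F (D D' : fsum2 K) :
  (forall b1 b2, coef2 D b1 b2 = coef2 D' b1 b2) -> fsum2_lift F D = fsum2_lift F D'.
Proof.
move=> eqD; have eq_malg : malg_of_fsum2 D = malg_of_fsum2 D'.
  by apply/malgP => -[b1 b2]; rewrite !malg_of_fsum2_coef.
suff fsum2_liftE E : fsum2_lift F E = mlift (fun k => F k.1 k.2) (malg_of_fsum2 E).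
  by rewrite !fsum2_liftE eq_malg.
by rewrite linear_sum; apply: eq_bigr => e _; rewrite [RHS]mliftU.
Qed.

Lemma fsum2_lift_mlift (T : choiceType)
  (G : option mterm -> option mterm -> T -> W) (g : {malg K[T]}) (D : fsum2 K) :
  fsum2_lift (fun b1 b2 => mlift (G b1 b2) g) D =
  mlift (fun k => fsum2_lift (fun b1 b2 => G b1 b2 k) D) g.
Proof.
elim: D => [|e D IH]; rewrite /fsum2_lift ?big_nil.
  by rewrite /mlift big1 // => k _; rewrite big_nil scaler0.
under [RHS]eq_mlift do rewrite big_cons.
by rewrite mlift_lin_fun big_cons; congr (_ + _); apply: IH.
Qed.

Lemma eq_fsum2_lift (F G : option mterm -> option mterm -> W) D :
  F =2 G -> fsum2_lift F D = fsum2_lift G D.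
Proof. by move=> eFG; apply: eq_bigr => e _; rewrite eFG. Qed.

End FormalSums.

Lemma mag_act_sum (K : fieldType) (H : lmodType K) (mul : H -> H -> H) n
  (p : Mag K n) (x : 'I_n -> H) :
  mag_act +%R 0 *:%R mul p x =
  \sum_(e <- p) e.1.1 *: eval_tree 0 mul e.1.2 [seq x ((e.2 : 'S_n)^-1 i)%g | i <- enum 'I_n].
Proof. by elim: p => [|e p IH]; rewrite ?big_nil ?big_cons //= IH. Qed.

Lemma eval_tree_map (A B : Type) (h : A -> B) (mulA : A -> A -> A) (mulB : B -> B -> B)
  (a0 : A) (b0 : B) t xs :
  {morph h : a b / mulA a b >-> mulB a b} -> size xs = leaves t ->
  h (eval_tree a0 mulA t xs) = eval_tree b0 mulB t (map h xs).
Proof.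
move=> h_mul; elim: t xs => [|l IHl r IHr] xs /=; first by case: xs => [|x [|y xs]].
move=> size_xs; rewrite h_mul IHl ?IHr ?map_take ?map_drop //.
  by rewrite size_drop size_xs addKn.
by rewrite size_takel // size_xs leq_addr.
Qed.

Section Evaluation.
Variables (K : fieldType) (H : lmodType K) (mul : H -> H -> H) (one : H)
  (Delta : H -> seq (H * H)).
Hypothesis HC : mag_coprod mul one Delta.
Variable g : nat -> H.

Fixpoint term_eval (u : mterm) : H :=
  match u with MLeaf k => g k | MNode a b => mul (term_eval a) (term_eval b) end.

Definition basis_eval (b : option mterm) : H := if b is Some u then term_eval u else one.

Definition fsum_eval (s : fsum K) : H := \sum_(x <- s) x.1 *: basis_eval x.2.

Lemma basis_eval_mul a b : basis_eval (bmul a b) = mul (basis_eval a) (basis_eval b).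
Proof.
by case: a => [a|]; case: b => [b|] //=; rewrite ?(mag_mul1x HC) ?(mag_mulx1 HC).
Qed.

Lemma fsum_eval_nil : fsum_eval [::] = 0.
Proof. by rewrite /fsum_eval big_nil. Qed.

Lemma fsum_eval_cat s t : fsum_eval (s ++ t) = fsum_eval s + fsum_eval t.
Proof. by rewrite /fsum_eval big_cat. Qed.

Lemma fsum_eval_scale c s : fsum_eval (fscale c s) = c *: fsum_eval s.
Proof. by rewrite /fsum_eval big_map scaler_sumr; apply: eq_bigr => x _; rewrite scalerA. Qed.

Lemma fsum_eval_mul s t : fsum_eval (fmul s t) = mul (fsum_eval s) (fsum_eval t).
Proof.
rewrite /fsum_eval big_allpairs_dep (lin_sum (mag_mull HC _)).
apply: eq_bigr => x _; rewrite (linZ (mag_mull HC _)) (lin_sum (mag_mulr HC _)).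
rewrite scaler_sumr; apply: eq_bigr => y _.
by rewrite (linZ (mag_mulr HC _)) basis_eval_mul scalerA mulrC.
Qed.

Lemma fsum_eval_tree t xs :
  fsum_eval (eval_tree [::] (@fmul K) t xs) = eval_tree 0 mul t (map fsum_eval xs).
Proof.
elim: t xs => [|l IHl r IHr] [|x xs] //=; rewrite ?fsum_eval_nil //.
  by rewrite fsum_eval_mul IHl IHr.
by rewrite fsum_eval_mul IHl IHr map_take map_drop.
Qed.

Lemma mag_act_eval_free n (p : Mag K n) (x : 'I_n -> H) :
  (forall i : 'I_n, g i = x i) -> mag_act +%R 0 *:%R mul p x = fsum_eval (eval_free p).
Proof.
move=> gx; elim: p => [|e p IH]; first by rewrite /eval_free /= fsum_eval_nil.
rewrite mag_act_sum big_cons -mag_act_sum IH /eval_free /= -/(eval_free p).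
rewrite fsum_eval_cat fsum_eval_scale fsum_eval_tree -[in RHS]map_comp.
congr (_ *: eval_tree _ _ _ _ + _); apply: eq_map => i /=.
by rewrite /fsum_eval big_seq1 scale1r /= gx.
Qed.

End Evaluation.

Section DeltaEvaluation.
Variables (K : fieldType) (H : lmodType K) (mul : H -> H -> H) (one : H)
  (Delta : H -> seq (H * H)).
Hypothesis HC : mag_coprod mul one Delta.

Lemma tsum_cat (W : lmodType K) (b : H -> H -> W) D1 D2 :
  tsum b (D1 ++ D2) = tsum b D1 + tsum b D2.
Proof. by rewrite /tsum big_cat. Qed.

Lemma tsum_tscale (W : lmodType K) (b : H -> H -> W) k D :
  bilinear_map b -> tsum b (tscale k D) = k *: tsum b D.
Proof.
move=> b_bil; rewrite /tsum big_map scaler_sumr.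
by apply: eq_bigr => x _; rewrite (linZ (bilinear_linl b_bil _)).
Qed.

Lemma tsum_Delta0 (W : lmodType K) (b : H -> H -> W) :
  bilinear_map b -> tsum b (Delta 0) = 0.
Proof.
move=> b_bil; have := mag_DeltaD HC (-1) 0 0 b_bil.
by rewrite scaler0 addr0 -!/(tsum b _) tsum_cat tsum_tscale // scaleN1r addNr.
Qed.

Lemma Delta_prim0 : Delta_prim one Delta 0.
Proof.
move=> W b b_bil; rewrite -/(tsum b _) tsum_Delta0 // big_cons big_seq1.
by rewrite (lin0 (bilinear_linl b_bil _)) (lin0 (bilinear_linr b_bil _)) addr0.
Qed.

Variable g : nat -> H.
Hypothesis g_prim : forall k, Delta_prim one Delta (g k).
Local Notation beval := (basis_eval mul one g).

Lemma tsum_Delta_term_eval u (W : lmodType K) (b : H -> H -> W) : bilinear_map b ->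
  tsum b (Delta (term_eval mul g u)) =
  fsum2_lift (fun b1 b2 => b (beval b1) (beval b2)) (delta_t K u).
Proof.
elim: u W b => [k|l IHl r IHr] W b b_bil.
  by rewrite /tsum (g_prim k b_bil) /fsum2_lift !big_cons !big_nil !scale1r.
rewrite /tsum (mag_DeltaM HC _ _ b_bil) /fsum2_lift !big_cat !big_map !big_seq1.
rewrite scaleN1r -(linN (bilinear_linl b_bil _)); congr (_ + (_ + _)).
- have := IHl _ _ (bilinear_compr b_bil (mag_mull HC (term_eval mul g r))).
  by rewrite /tsum => ->; apply: eq_bigr => e _; rewrite (basis_eval_mul HC).
- have := IHr _ _ (bilinear_compl b_bil (mag_mulr HC (term_eval mul g l))).
  by rewrite /tsum => ->; apply: eq_bigr => e _; rewrite (basis_eval_mul HC).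
Qed.

Lemma tsum_Delta_basis_eval bb (W : lmodType K) (b : H -> H -> W) : bilinear_map b ->
  tsum b (Delta (beval bb)) = fsum2_lift (fun b1 b2 => b (beval b1) (beval b2)) (delta_b K bb).
Proof.
case: bb => [u|] b_bil; first exact: tsum_Delta_term_eval.
by rewrite /tsum (mag_Delta1 HC b_bil) /fsum2_lift !big_seq1 scale1r.
Qed.

Lemma tsum_Delta_fsum_eval s (W : lmodType K) (b : H -> H -> W) : bilinear_map b ->
  tsum b (Delta (fsum_eval mul one g s)) =
  fsum2_lift (fun b1 b2 => b (beval b1) (beval b2)) (fdelta s).
Proof.
move=> b_bil; elim: s => [|x s IH].
  by rewrite (fsum_eval_nil mul one g) tsum_Delta0 // /fsum2_lift big_nil.
rewrite /fsum_eval big_cons -/(fsum_eval mul one g s) /tsum (mag_DeltaD HC _ _ _ b_bil).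
rewrite -!/(tsum b _) tsum_cat tsum_tscale // IH tsum_Delta_basis_eval //.
rewrite /fdelta /fsum2_lift /= big_cat big_map scaler_sumr /=.
by congr (_ + _); apply: eq_bigr => e _; rewrite scalerA.
Qed.

Lemma fsum2_lift_prim_list (W : lmodType K) (b : H -> H -> W) s : bilinear_map b ->
  fsum2_lift (fun b1 b2 => b (beval b1) (beval b2)) (prim_list s) =
  b (fsum_eval mul one g s) one + b one (fsum_eval mul one g s).
Proof.
move=> b_bil; rewrite /fsum2_lift big_cat !big_map /fsum_eval.
rewrite (lin_sum (bilinear_linl b_bil _)) (lin_sum (bilinear_linr b_bil _)).
congr (_ + _); apply: eq_bigr => x _.
  by rewrite (linZ (bilinear_linl b_bil _)).
by rewrite (linZ (bilinear_linr b_bil _)).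
Qed.

Lemma fsum_eval_Delta_prim s :
  (forall b1 b2, coef2 (fdelta s) b1 b2 = coef2 (prim_list s) b1 b2) ->
  Delta_prim one Delta (fsum_eval mul one g s).
Proof.
move=> eq_coef W b b_bil; rewrite -/(tsum b _) tsum_Delta_fsum_eval //.
by rewrite (fsum2_lift_coef2 _ eq_coef) fsum2_lift_prim_list // big_cons big_seq1.
Qed.

End DeltaEvaluation.

Lemma mag_act_Delta_prim (K : fieldType) (H : lmodType K) (mul : H -> H -> H) (one : H)
  (Delta : H -> seq (H * H)) n (p : Mag K n) (x : 'I_n -> H) :
  mag_coprod mul one Delta -> PrimMag p -> (forall i, Delta_prim one Delta (x i)) ->
  Delta_prim one Delta (mag_act +%R 0 *:%R mul p x).
Proof.
move=> HC [_ [_ p_prim]] x_prim.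
pose g k := if insub k is Some i then x i else 0.
have gx (i : 'I_n) : g i = x i by rewrite /g valK.
have g_prim k : Delta_prim one Delta (g k).
  by rewrite /g; case: insubP => [i _ _|_]; [exact: x_prim | exact: (Delta_prim0 HC)].
by rewrite (mag_act_eval_free HC p gx); apply: fsum_eval_Delta_prim.
Qed.

Lemma AsMag_counit_prim (K : fieldType) (H : lmodType K) (mul : H -> H -> H) (one : H)
  (Delta : H -> seq (H * H)) (eps : H -> K) (x : H) :
  AsMag_bialgebra mul one Delta eps -> Delta_prim one Delta x -> eps x = 0.
Proof.
case=> _ [_ [_ [_ [_ [epsL [_ [counit [Delta1 _]]]]]]]] x_prim.
have eps_lin : linear (eps : H -> K^o) by move=> k u v; apply: epsL.
pose b (u v : H) := eps u *: v.
have b_bil : bilinear_map b.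
  split=> k u v w; rewrite /b ?(eps_lin k u v) ?scalerDl ?scalerDr scalerA //.
  by rewrite scalerA mulrC.
have := (counit x).1; rewrite (x_prim _ b b_bil) big_cons big_seq1 /b /= => counit_x.
have := (counit one).1; rewrite (Delta1 _ b b_bil) big_seq1 /b /= => counit_one.
set a := eps x; set e := eps one.
have ha : a = a * e + e * a by rewrite {1}/a -{1}counit_x (linD eps_lin) !(linZ eps_lin).
have he : e = e * e by rewrite {1}/e -{1}counit_one (linZ eps_lin).
have ae : a * e = a by rewrite {1}ha mulrDl -mulrA -he mulrAC -he -ha.
have a2 : a = a + a by rewrite {1}ha [e * a]mulrC ae.
by apply: (addrI a); rewrite addr0 -a2.
Qed.

Lemma AsMag_act_prim (K : fieldType) (H : lmodType K) (mul : H -> H -> H) (one : H)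
  (Delta : H -> seq (H * H)) (eps : H -> K) :
  AsMag_bialgebra mul one Delta eps ->
  forall n (p : Mag K n) (x : 'I_n -> H), PrimMag p -> (forall i, PrimH one Delta eps (x i)) ->
  PrimH one Delta eps (mag_act +%R 0 *:%R mul p x).
Proof.
move=> HB n p x p_prim x_prim.
have act_prim := mag_act_Delta_prim (AsMag_bialgebra_coprod HB) p_prim (fun i => (x_prim i).2).
by split; first exact: AsMag_counit_prim HB act_prim.
Qed.

Section FreeModel.
Variable K : fieldType.
Local Notation HM := {malg K[option mterm]}.
Implicit Types (x y : HM) (s : fsum K).

Definition free_mul x y : HM := mlift2 (fun i j => << bmul i j >>) x y.
Definition free_one : HM := << None >>.
Definition free_Delta x : seq (HM * HM) :=
  flatten [seq [seq ((x@_b * d.1.1) *: << d.1.2 >>, << d.2 >>) | d <- delta_b K b]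
          | b <- msupp x].
Definition free_gen k : HM := << Some (MLeaf k) >>.

Lemma free_mulUl a y : free_mul << a >> y = mlift (fun j => << bmul a j >>) y.
Proof. by rewrite /free_mul /mlift2 mliftU scale1r. Qed.

Lemma free_mulUr x b : free_mul x << b >> = mlift (fun i => << bmul i b >>) x.
Proof. by apply: eq_mlift => i; rewrite mliftU scale1r. Qed.

Lemma free_mulUU a b : free_mul << a >> << b >> = << bmul a b >>.
Proof. by rewrite free_mulUl mliftU scale1r. Qed.

Lemma eval_tree_free_malgU t (us : seq mterm) : size us = leaves t ->
  eval_tree 0 free_mul t (map (fun u => << Some u >> : HM) us) =
  << Some (eval_tree (MLeaf 0) MNode t us) >>.
Proof.
move=> size_us; rewrite -(@eval_tree_map _ _ _ MNode _ (MLeaf 0)) // => u v.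
by rewrite free_mulUU.
Qed.

Lemma free_mul_linl z : linear (free_mul^~ z).
Proof. by move=> k x y; rewrite /free_mul /mlift2 linearP. Qed.

Lemma free_mul_linr z : linear (free_mul z).
Proof.
move=> k x y; rewrite /free_mul /mlift2 -mlift_lin_fun.
by apply: eq_mlift => i; rewrite linearP.
Qed.

Lemma free_mul1x : left_id free_one free_mul.
Proof. by move=> x; rewrite /free_one free_mulUl mlift_malgU. Qed.

Lemma free_mulx1 : right_id free_one free_mul.
Proof.
by move=> x; rewrite /free_one free_mulUr -[RHS]mlift_malgU; apply: eq_mlift => -[].
Qed.

Lemma tsum_free_Delta (W : lmodType K) (b : HM -> HM -> W) x : bilinear_map b ->
  tsum b (free_Delta x) =
  mlift (fun k => fsum2_lift (fun b1 b2 => b << b1 >> << b2 >>) (delta_b K k)) x.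
Proof.
move=> b_bil; rewrite /tsum big_flatten /= big_map; apply: eq_bigr => k _.
rewrite big_map /fsum2_lift scaler_sumr; apply: eq_bigr => d _ /=.
by rewrite (linZ (bilinear_linl b_bil _)) scalerA.
Qed.

Lemma free_DeltaD (k : K) x y :
  teq2 (free_Delta (k *: x + y)) (tscale k (free_Delta x) ++ free_Delta y).
Proof.
move=> W b b_bil; rewrite -!/(tsum b _) tsum_cat tsum_tscale //.
by rewrite !tsum_free_Delta // linearP.
Qed.

Lemma free_Delta1 : teq2 (free_Delta free_one) [:: (free_one, free_one)].
Proof.
move=> W b b_bil; rewrite -!/(tsum b _) tsum_free_Delta // mliftU scale1r.
by rewrite /fsum2_lift /tsum !big_seq1 scale1r.
Qed.

Lemma fsum2_lift_delta_bmul (W : lmodType K) (F : option mterm -> option mterm -> W) i j :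
  fsum2_lift F (delta_b K (bmul i j)) =
  fsum2_lift (fun b1 b2 => F b1 (bmul b2 j)) (delta_b K i) +
  (fsum2_lift (fun b1 b2 => F (bmul i b1) b2) (delta_b K j) - F i j).
Proof.
rewrite /fsum2_lift; case: i => [l|] /=; case: j => [r|] /=.
- by rewrite !big_cat !big_map big_seq1 scaleN1r.
- by rewrite big_seq1 scale1r /= subrr addr0; apply: eq_bigr => -[[c u] [v|]].
- by rewrite big_seq1 scale1r /= addrC subrK.
- by rewrite !big_seq1 scale1r /= subrr addr0.
Qed.

Lemma tsum_free_Delta_mul (W : lmodType K) (b : HM -> HM -> W) x y : bilinear_map b ->
  tsum b (free_Delta (free_mul x y)) =
  mlift2 (fun i j => fsum2_lift (fun b1 b2 => b << b1 >> << b2 >>) (delta_b K (bmul i j))) x y.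
Proof.
move=> b_bil; rewrite tsum_free_Delta // /free_mul (lin_mlift2 _ _ _ (mlift_is_linear _)).
by apply: eq_mlift => i; apply: eq_mlift => j; rewrite mliftU scale1r.
Qed.

Lemma tsum_free_Delta_mulr (W : lmodType K) (b : HM -> HM -> W) x y : bilinear_map b ->
  tsum b [seq (z.1, free_mul z.2 y) | z <- free_Delta x] =
  mlift2 (fun i j => fsum2_lift (fun b1 b2 => b << b1 >> << bmul b2 j >>) (delta_b K i)) x y.
Proof.
move=> b_bil; rewrite /tsum big_map -/(tsum (fun u v => b u (free_mul v y)) _).
rewrite tsum_free_Delta; last exact: (bilinear_compr b_bil (free_mul_linl y)).
apply: eq_mlift => i; rewrite -fsum2_lift_mlift; apply: eq_fsum2_lift => b1 b2.
by rewrite free_mulUl (lin_mlift _ _ (bilinear_linr b_bil _)).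
Qed.

Lemma tsum_free_Delta_mull (W : lmodType K) (b : HM -> HM -> W) x y : bilinear_map b ->
  tsum b [seq (free_mul x z.1, z.2) | z <- free_Delta y] =
  mlift2 (fun i j => fsum2_lift (fun b1 b2 => b << bmul i b1 >> << b2 >>) (delta_b K j)) x y.
Proof.
move=> b_bil; rewrite /tsum big_map -/(tsum (fun u v => b (free_mul x u) v) _).
rewrite tsum_free_Delta; last exact: (bilinear_compl b_bil (free_mul_linr x)).
rewrite mlift2_swap; apply: eq_mlift => j; rewrite -fsum2_lift_mlift.
by apply: eq_fsum2_lift => b1 b2; rewrite free_mulUr (lin_mlift _ _ (bilinear_linl b_bil _)).
Qed.

Lemma free_DeltaM x y : teq2 (free_Delta (free_mul x y))
  ([seq (z.1, free_mul z.2 y) | z <- free_Delta x]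
   ++ [seq (free_mul x z.1, z.2) | z <- free_Delta y] ++ [:: (- x, y)]).
Proof.
move=> W b b_bil; rewrite -!/(tsum b _) !tsum_cat tsum_free_Delta_mul //.
rewrite tsum_free_Delta_mulr // tsum_free_Delta_mull // /tsum big_seq1 /=.
rewrite (linN (bilinear_linl b_bil _)) (bilinear_mlift2 _ _ b_bil) -mlift2_comb.
by apply: eq_mlift => i; apply: eq_mlift => j; apply: fsum2_lift_delta_bmul.
Qed.

Lemma free_coprod : mag_coprod free_mul free_one free_Delta.
Proof.
split; [exact: free_mul_linl | exact: free_mul_linr | exact: free_mul1x
       | exact: free_mulx1 | exact: free_DeltaD | exact: free_Delta1 | exact: free_DeltaM].
Qed.

Lemma free_gen_prim k : Delta_prim free_one free_Delta (free_gen k).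
Proof.
move=> W b b_bil; rewrite -!/(tsum b _) tsum_free_Delta // mliftU scale1r.
by rewrite /fsum2_lift /tsum !big_cons !big_nil !scale1r.
Qed.

Definition free_eval (s : fsum K) : HM := fsum_eval free_mul free_one free_gen s.

Lemma term_eval_free u : term_eval free_mul free_gen u = << Some u >>.
Proof. by elim: u => [k|a IHa b IHb] //=; rewrite IHa IHb free_mulUU. Qed.

Lemma basis_eval_free bb : basis_eval free_mul free_one free_gen bb = << bb >>.
Proof. by case: bb => [u|] //=; rewrite term_eval_free. Qed.

Definition coef_form (b1 b2 : option mterm) (u v : HM) : K^o := u@_b1 * v@_b2.

Lemma coef_form_bilinear b1 b2 : bilinear_map (coef_form b1 b2).
Proof.
split=> k x y z; rewrite /coef_form mcoeffD mcoeffZ.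
  by rewrite mulrDl -mulrA.
by rewrite mulrDr mulrCA.
Qed.

Lemma coef2_fsum2_lift D b1 b2 :
  coef2 D b1 b2 = fsum2_lift (fun u v => coef_form b1 b2 << u >> << v >>) D.
Proof.
rewrite /coef2 /fsum2_lift big_mkcond /=; apply: eq_bigr => e _.
rewrite /coef_form !mcoeffU; case: (e.1.2 == b1); case: (e.2 == b2) => /=.
all: by rewrite ?mulr1 ?mulr0 ?scaler0 // -[LHS]mulr1.
Qed.

Lemma free_Delta_prim_coef2 s : Delta_prim free_one free_Delta (free_eval s) ->
  forall b1 b2, coef2 (fdelta s) b1 b2 = coef2 (prim_list s) b1 b2.
Proof.
move=> s_prim b1 b2; have form_bil := coef_form_bilinear b1 b2.
have evalE D : fsum2_lift (fun u v => coef_form b1 b2 << u >> << v >>) D =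
    fsum2_lift (fun u v => coef_form b1 b2 (basis_eval free_mul free_one free_gen u)
                                       (basis_eval free_mul free_one free_gen v)) D.
  by apply: eq_fsum2_lift => u v; rewrite !basis_eval_free.
rewrite !coef2_fsum2_lift !evalE fsum2_lift_prim_list //.
rewrite -(tsum_Delta_fsum_eval free_coprod free_gen_prim s form_bil).
by rewrite /tsum (s_prim _ _ form_bil) big_cons big_seq1.
Qed.

Lemma delta_t_nonunit u : all (fun d => (d.1.2 != None) || (d.2 != None)) (delta_t K u).
Proof.
elim: u => [k|l IHl r IHr] //=; rewrite !all_cat /= andbT !all_map.
by apply/andP; split; apply/allP => -[[c [u|]] [v|]].
Qed.

Lemma coef2_fdelta_unit s : coef2 (fdelta s) None None = coef s None.
Proof.
rewrite /coef2 /fdelta big_flatten big_map /coef [RHS]big_mkcond /=.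
apply: eq_bigr => -[c [u|]] _ /=.
  rewrite big_map big1_seq // => d /andP[/andP[/eqP /= d1 /eqP /= d2] dd].
  by have := allP (delta_t_nonunit u) d dd; rewrite d1 d2.
by rewrite big_cons big_nil /= mulr1 addr0.
Qed.

Lemma coef2_prim_list_unit s : coef2 (prim_list s) None None = coef s None + coef s None.
Proof.
rewrite /coef2 /prim_list big_cat !big_map /=.
by congr (_ + _); apply: eq_bigl => x; rewrite ?andbT.
Qed.

Lemma free_prim_of_Delta_prim s : Delta_prim free_one free_Delta (free_eval s) -> free_prim s.
Proof.
move=> s_prim; split; last exact: free_Delta_prim_coef2.
(* The (None, None) coefficient of the primitivity identity reads c = c + c. *)
have := free_Delta_prim_coef2 s_prim None None.
rewrite coef2_fdelta_unit coef2_prim_list_unit /fcounit => c2.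
by apply: (addrI (coef s None)); rewrite addr0 -c2.
Qed.

End FreeModel.

Lemma labels_eval_tree t ls : size ls = leaves t ->
  labels (eval_tree (MLeaf 0) MNode t (map MLeaf ls)) = ls.
Proof.
elim: t ls => [|l IHl r IHr] ls /=; first by case: ls => [|x [|y ls]].
move=> size_ls; rewrite -map_take -map_drop IHl ?IHr ?cat_take_drop //.
  by rewrite size_drop size_ls addKn.
by rewrite size_takel // size_ls leq_addr.
Qed.

Lemma leaves_shape u : leaves (Defs.shape u) = size (labels u).
Proof. by elim: u => [k|a IHa b IHb] //=; rewrite IHa IHb size_cat. Qed.

Lemma eval_tree_shape u : eval_tree (MLeaf 0) MNode (Defs.shape u) (map MLeaf (labels u)) = u.
Proof.
elim: u => [k|a IHa b IHb] //=.
rewrite map_cat leaves_shape -(size_map MLeaf) take_size_cat // drop_size_cat //.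
by rewrite IHa IHb.
Qed.

Lemma labels_shift k u : labels (shift_term k u) = map (addn k) (labels u).
Proof. by elim: u => [j|a IHa b IHb] //=; rewrite IHa IHb map_cat. Qed.

Lemma labels_to_term N t (s : 'S_N) : leaves t = N ->
  labels (to_term t s) = [seq val (s^-1 i)%g | i <- enum 'I_N].
Proof.
move=> leaves_t; rewrite /to_term (map_comp MLeaf) labels_eval_tree //.
by rewrite size_map size_enum_ord.
Qed.

Lemma perm_val_enum n (s : 'S_n) : perm_eq [seq val (s i) | i <- enum 'I_n] (iota 0 n).
Proof.
rewrite -val_enum_ord (map_comp val s) perm_map // uniq_perm ?enum_uniq //.
  by rewrite map_inj_uniq ?enum_uniq //; apply: perm_inj.
by move=> i; rewrite mem_enum; apply/mapP; exists (s^-1 i)%g; rewrite ?mem_enum ?permKV.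
Qed.

Lemma perm_of_labelsE M ls : perm_eq ls (iota 0 M) ->
  [seq val ((perm_of_labels M ls)^-1 i)%g | i <- enum 'I_M] = ls.
Proof.
move=> ls_perm; have size_ls : size ls = M by rewrite (perm_size ls_perm) size_iota.
have ls_lt j : (j < M)%N -> (nth 0%N ls j < M)%N.
  move=> jM; have : nth 0%N ls j \in iota 0 M by rewrite -(perm_mem ls_perm) mem_nth ?size_ls.
  by rewrite mem_iota.
have ls_uniq : uniq ls by rewrite (perm_uniq ls_perm) iota_uniq.
pose F := [ffun j : 'I_M => insubd j (nth 0%N ls j)].
have FE j : val (F j) = nth 0%N ls j by rewrite ffunE val_insubd ls_lt.
have F_inj : injectiveb (aT := 'I_M) (rT := 'I_M) F.
  apply/(injectiveP F) => i j /(congr1 val); rewrite !FE => eq_ij; apply/val_inj/eqP.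
  by rewrite -(nth_uniq 0%N _ _ ls_uniq) ?size_ls ?eq_ij ?ltn_ord.
have permE i : val ((insubd (1%g : 'S_M) F) i) = nth 0%N ls i.
  rewrite -pvalE; have -> : pval (insubd (1%g : 'S_M) F) = val (insubd (1%g : 'S_M) F) by [].
  by rewrite val_insubd F_inj FE.
rewrite /perm_of_labels invgK (eq_map permE) (map_comp (nth 0%N ls) val) val_enum_ord.
by rewrite -size_ls -/(mkseq _ _) mkseq_nth.
Qed.

Section Composition.
Variables (K : fieldType) (n : nat) (m : 'I_n -> nat) (p : Mag K n)
  (q : forall i : 'I_n, Mag K (m i)).
Hypothesis p_in : in_Mag p.
Hypothesis q_in : forall i, in_Mag (q i).
Local Notation M := (\sum_(i < n) m i)%N.

Definition comp_leaf (k : nat) : seq (K * mterm) :=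
  match @insub _ (fun k => (k < n)%N) 'I_n k with
  | Some i => [seq (x.1.1, shift_term (offset m i) (to_term x.1.2 x.2)) | x <- q i]
  | None => [::]
  end.

Lemma comp_leafE (i : 'I_n) :
  comp_leaf i = [seq (x.1.1, shift_term (offset m i) (to_term x.1.2 x.2)) | x <- q i].
Proof. by rewrite /comp_leaf valK. Qed.

Lemma mag_compE : mag_comp p q =
  flatten [seq [seq (x.1.1 * y.1, Defs.shape y.2, perm_of_labels M (labels y.2))
               | y <- subst_term comp_leaf (to_term x.1.2 x.2)] | x <- p].
Proof. by []. Qed.

Definition arity (k : nat) : nat :=
  if @insub _ (fun k => (k < n)%N) 'I_n k is Some i then m i else 0%N.

Definition block (k : nat) : seq nat := iota (\sum_(j < k) arity j) (arity k).

Lemma offsetE (i : 'I_n) : offset m i = (\sum_(j < i) arity j)%N.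
Proof.
rewrite /offset (eq_bigr (fun j : 'I_n => arity j)) => [|j _]; last by rewrite /arity valK.
rewrite -(big_mkord (fun j => (j < i)%N) arity) -(big_mkord xpredT arity).
by rewrite (big_nat_widen 0 i n) ?(ltnW (ltn_ord i)).
Qed.

Lemma total_arity : M = (\sum_(k < n) arity k)%N.
Proof. by apply: eq_bigr => i _; rewrite /arity valK. Qed.

Lemma flatten_block a : (a <= n)%N ->
  flatten [seq block k | k <- iota 0 a] = iota 0 (\sum_(k < a) arity k).
Proof.
elim: a => [|a IH] a_le; first by rewrite big_ord0.
rewrite -addn1 iotaD map_cat flatten_cat IH ?(ltnW a_le) // add0n /= cats0.
by rewrite addn1 big_ord_recr /= iotaD add0n.
Qed.

Lemma labels_comp_leaf k z : k \in iota 0 n -> z \in comp_leaf k ->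
  perm_eq (labels z.2) (block k).
Proof.
rewrite mem_iota add0n => /= kn; have [i ->] : exists i : 'I_n, k = i by exists (Ordinal kn).
rewrite comp_leafE => /mapP[x x_q ->] /=.
have leaves_x : leaves x.1.2 = m i by apply/eqP; apply: (allP (q_in i)).
rewrite labels_shift labels_to_term // /block offsetE /arity valK.
by rewrite -[X in iota X _]addn0 iotaDl perm_map // perm_val_enum.
Qed.

Lemma labels_subst_term u y : y \in subst_term comp_leaf u ->
  (forall k, k \in labels u -> k \in iota 0 n) ->
  perm_eq (labels y.2) (flatten (map block (labels u))).
Proof.
elim: u y => [k|a IHa b IHb] y /=.
  by move=> y_in k_lt; rewrite cats0; apply: labels_comp_leaf => //; apply: k_lt; rewrite inE.
case/allpairsP => -[y1 y2] [y1_in y2_in ->] lt_ab /=.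
rewrite map_cat flatten_cat perm_cat //.
  by apply: IHa => // k k_in; apply: lt_ab; rewrite mem_cat k_in.
by apply: IHb => // k k_in; apply: lt_ab; rewrite mem_cat k_in orbT.
Qed.

Lemma labels_comp x y : x \in p -> y \in subst_term comp_leaf (to_term x.1.2 x.2) ->
  perm_eq (labels y.2) (iota 0 M).
Proof.
move=> x_p y_in; have leaves_x : leaves x.1.2 = n by apply/eqP; apply: (allP p_in).
have labelsE := labels_to_term x.2 leaves_x.
apply: perm_trans (labels_subst_term y_in _) _.
  by move=> k; rewrite labelsE (perm_mem (perm_val_enum _)).
by rewrite labelsE total_arity -flatten_block // perm_flatten // perm_map // perm_val_enum.
Qed.

Lemma in_Mag_comp : in_Mag (mag_comp p q).
Proof.
apply/allP => e; rewrite mag_compE => /flattenP[s /mapP[x x_p ->] /mapP[y y_in ->]] /=.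
by rewrite leaves_shape (perm_size (labels_comp x_p y_in)) size_iota.
Qed.

Local Notation HM := {malg K[option mterm]}.

Definition leaf_sum (ys : seq (K * mterm)) : HM := \sum_(y <- ys) y.1 *: << Some y.2 >>.

Definition block_op (i : 'I_n) : HM :=
  mag_act +%R 0 *:%R (@free_mul K) (q i) (fun j => free_gen K (offset m i + j)).

Lemma free_genE N (F : 'I_N -> nat) (s : seq 'I_N) :
  [seq free_gen K (F i) | i <- s] = map (fun u => << Some u >> : HM) (map MLeaf (map F s)).
Proof. by rewrite -!map_comp. Qed.

Lemma leaf_sum_subst_node a b : leaf_sum (subst_term comp_leaf (MNode a b)) =
  free_mul (leaf_sum (subst_term comp_leaf a)) (leaf_sum (subst_term comp_leaf b)).
Proof.
rewrite /= /leaf_sum big_allpairs_dep (lin_sum (free_mul_linl _)); apply: eq_bigr => y1 _.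
rewrite (linZ (free_mul_linl _)) (lin_sum (free_mul_linr _)) scaler_sumr.
by apply: eq_bigr => y2 _; rewrite (linZ (free_mul_linr _)) free_mulUU scalerA mulrC.
Qed.

Lemma leaf_sum_comp_leaf (i : 'I_n) : leaf_sum (comp_leaf i) = block_op i.
Proof.
rewrite comp_leafE /leaf_sum big_map /block_op mag_act_sum !big_seq; apply: eq_bigr => x x_q.
have leaves_x : leaves x.1.2 = m i by apply/eqP; apply: (allP (q_in i)).
rewrite free_genE eval_tree_free_malgU; last by rewrite !size_map -enumT size_enum_ord.
rewrite /to_term (map_comp MLeaf) (@eval_tree_map _ _ _ MNode MNode (MLeaf 0) (MLeaf 0)) //.
  by rewrite -!map_comp.
by rewrite !size_map -enumT size_enum_ord.
Qed.

Lemma eval_tree_block_op (x : K * tree * 'S_n) : leaves x.1.2 = n ->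
  eval_tree 0 (@free_mul K) x.1.2 [seq block_op ((x.2 : 'S_n)^-1 i)%g | i <- enum 'I_n] =
  leaf_sum (subst_term comp_leaf (to_term x.1.2 x.2)).
Proof.
move=> leaves_x; rewrite /to_term (map_comp MLeaf).
rewrite (@eval_tree_map _ _ (fun u => leaf_sum (subst_term comp_leaf u)) MNode (@free_mul K)
  (MLeaf 0) 0).
- by rewrite -!map_comp; congr eval_tree; apply: eq_map => j /=; rewrite -leaf_sum_comp_leaf.
- exact: leaf_sum_subst_node.
- by rewrite !size_map -enumT size_enum_ord.
Qed.

Lemma free_eval_mag_comp :
  free_eval (eval_free (mag_comp p q)) = mag_act +%R 0 *:%R (@free_mul K) p block_op.
Proof.
rewrite /free_eval -(mag_act_eval_free (free_coprod K) (mag_comp p q) (x := free_gen K)) //.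
rewrite !mag_act_sum mag_compE big_flatten big_map; apply: eq_big_seq => x x_p.
have leaves_x : leaves x.1.2 = n by apply/eqP; apply: (allP p_in).
rewrite eval_tree_block_op // /leaf_sum scaler_sumr big_map; apply: eq_big_seq => y y_in.
rewrite -scalerA; congr (_ *: (_ *: _)).
rewrite free_genE perm_of_labelsE ?(labels_comp x_p y_in) // eval_tree_free_malgU.
  by rewrite eval_tree_shape.
by rewrite size_map leaves_shape.
Qed.

End Composition.

Lemma PrimMag_comp (K : fieldType) (n : nat) (m : 'I_n -> nat) (p : Mag K n)
  (q : forall i : 'I_n, Mag K (m i)) :
  PrimMag p -> (forall i, PrimMag (q i)) -> PrimMag (mag_comp p q).
Proof.
move=> p_prim q_prim; have p_in := p_prim.1; have q_in i := (q_prim i).1.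
split; first exact: in_Mag_comp.
apply: free_prim_of_Delta_prim; rewrite free_eval_mag_comp //.
apply: (mag_act_Delta_prim (free_coprod K)) => // i.
apply: (mag_act_Delta_prim (free_coprod K)) => // j.
exact: free_gen_prim.
Qed.

Lemma PrimMag_id (K : fieldType) : PrimMag (mag_id K).
Proof.
split=> //; apply: free_prim_of_Delta_prim.
rewrite /free_eval -(mag_act_eval_free (free_coprod K) (mag_id K) (x := free_gen K)) //.
by rewrite mag_act_sum big_seq1 scale1r enum_ordSl; apply: free_gen_prim.
Qed.

Theorem corollary1p4 (K : fieldType) :
  (* (i) Prim Mag is a suboperad of Mag *)
  (PrimMag (mag_id K) /\
   forall (n : nat) (m : 'I_n -> nat) (p : Mag K n) (q : forall i : 'I_n, Mag K (m i)),
     PrimMag p -> (forall i, PrimMag (q i)) -> PrimMag (mag_comp p q)) /\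
  (* (ii) Prim H is an algebra over Prim Mag *)
  (forall (H : lmodType K) (mul : H -> H -> H) (one : H)
          (Delta : H -> seq (H * H)) (eps : H -> K),
     AsMag_bialgebra mul one Delta eps ->
     forall (n : nat) (p : Mag K n) (x : 'I_n -> H),
       PrimMag p -> (forall i, PrimH one Delta eps (x i)) ->
       PrimH one Delta eps (mag_act +%R 0 *:%R mul p x)).
Proof.
split; first by split; [exact: PrimMag_id | exact: PrimMag_comp].
exact: AsMag_act_prim.
Qed.
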